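(* Let $\mathcal{G}$ be a causal graph over a finite set $\mathbf{V}$ of variables with target variable $Y \in \mathbf{V}$ and set of intervenable variables $\mathbf{I} \subseteq \mathbf{V}\setminus\{Y\}$. Suppose that (i) there exists $C \in \mathrm{pa}_{\mathcal{G}}(Y)$ with $C \notin \mathbf{I}$, or (ii) there exists $C \in \mathrm{sp}_{\mathcal{G}}(Y)$. If there exists $X \in \mathrm{an}_{\mathcal{G}}(Y) \cap \mathbf{I}$ such that $\{\langle X, \{C\}\rangle\}$ is a mixed policy scope for $\mathcal{G}$, then there exists at least one structural causal model compatible with $\mathcal{G}$ for which $$\min_{\mathcal{S} \in \Sigma_{\text{hard}},\, \pi_{\mathcal{S}} \in \Pi_{\mathcal{S}}} \mu^Y_{\pi_{\mathcal{S}}} \;>\; \min_{\mathcal{S} \in \Sigma,\, \pi_{\mathcal{S}} \in \Pi_{\mathcal{S}}} \mu^Y_{\pi_{\mathcal{S}}}.$$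
   Context: A structural causal model (SCM) is a tuple $\mathcal{M}=\langle \mathbf{V}, \mathbf{U}, \mathcal{F}, p(\mathbf{U})\rangle$ where $\mathbf{U}$ is a set of mutually independent unobserved exogenous random variables with distribution $p(\mathbf{U})$ and $\mathcal{F}=\{f_V\}_{V\in\mathbf{V}}$ are deterministic functions with $V = f_V(\mathrm{pa}(V), \mathbf{U}_V)$, $\mathrm{pa}(V)\subseteq \mathbf{V}\setminus\{V\}$, $\mathbf{U}_V\subseteq\mathbf{U}$. Its causal graph has nodes $\mathbf{V}$, a directed edge $V\to W$ if $V\in\mathrm{pa}(W)$, and a bidirected edge $V\leftrightarrow W$ if $\mathbf{U}_V\cap\mathbf{U}_W\neq\emptyset$; causal graphs are assumed acyclic (no directed cycles). An SCM is compatible with a causal graph $\mathcal{G}$ over $\mathbf{V}$ if every edge of its causal graph is in $\mathcal{G}$. $\mathrm{pa}_{\mathcal{G}}(V)$, $\mathrm{an}_{\mathcal{G}}(V)$ denote parents and ancestors (nodes with a directed path to $V$) in $\mathcal{G}$; $\mathrm{sp}_{\mathcal{G}}(V)$ denotes nodes joined to $V$ by a bidirected edge. $\mathcal{R}_X$ denotes the range of $X$. A mixed policy scope (MPS) $\mathcal{S}$ for $\mathcal{G}$ is a collection of pairs $\langle X, \mathbf{C}_X\rangle$ with $X\in\mathbf{I}$, $\mathbf{C}_X\subseteq\mathbf{V}\setminus\{X,Y\}$, such that the graph obtained from $\mathcal{G}$ by removing all incoming edges into $X$ and adding directed edges from each element of $\mathbf{C}_X$ to $X$, for every pair in $\mathcal{S}$,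 is acyclic. $\Sigma$ is the set of all MPSs for $\mathcal{G}$ and $\Sigma_{\text{hard}}=\{\mathcal{S}\in\Sigma: \mathbf{C}_X=\emptyset \text{ for all } \langle X,\mathbf{C}_X\rangle\in\mathcal{S}\}$. A deterministic mixed policy (DMP) $\pi_{\mathcal{S}}$ compatible with $\mathcal{S}$ assigns to each $\langle X,\mathbf{C}_X\rangle\in\mathcal{S}$ a function $\pi_{X|\mathbf{C}_X}:\mathcal{R}_{\mathbf{C}_X}\to\mathcal{R}_X$ (a constant value in $\mathcal{R}_X$ when $\mathbf{C}_X=\emptyset$); $\Pi_{\mathcal{S}}$ is the set of such DMPs. Applying $\pi_{\mathcal{S}}$ to an SCM replaces each $f_X$ by $\pi_{X|\mathbf{C}_X}$ (so $X=\pi_{X|\mathbf{C}_X}(\mathbf{C}_X)$), yielding the interventional distribution $p_{\pi_{\mathcal{S}}}(\mathbf{V})$; the target effect is $\mu^Y_{\pi_{\mathcal{S}}}=\mathbb{E}_{p_{\pi_{\mathcal{S}}}}[Y]$. *)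

From HB Require Import structures.
From mathcomp Require Import all_boot all_order all_algebra.
From mathcomp Require Import reals.
Set Implicit Arguments. Unset Strict Implicit. Unset Printing Implicit Defensive.
Import Order.TTheory GRing.Theory Num.Theory.
Local Open Scope ring_scope.

(* A graph over V with directed edges [de w v] (w -> v) and bidirected
   edges [be v w] (v <-> w). *)
Record graph (V : finType) := Graph { de : rel V; be : rel V }.

Definition acyclic (V : finType) (e : rel V) : Prop :=
  forall (x : V) (p : seq V), path e x p -> last x p = x -> p = [::].

Definition causal_graph (V : finType) (G : graph V) : Prop :=
  [/\ acyclic (de G), symmetric (be G) & irreflexive (be G)].

(* Structural causal model with finitely many mutually independent exogenous
   variables (each with a finite distribution) and endogenous variables taking
   values in finite ranges [rng v] of reals. *)
Record SCM (V : finType) (R : realType) := MkSCM {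
  exo : finType;
  exoval : finType;
  pU : exo -> exoval -> R;
  pU_ge0 : forall e a, 0 <= pU e a;
  pU_sum1 : forall e, \sum_a pU e a = 1;
  rng : V -> seq R;
  pa : rel V;                              (* pa w v : w is a parent of v *)
  uscope : V -> {set exo};
  f : V -> (V -> R) -> {ffun exo -> exoval} -> R;
  pa_irr : forall v, ~~ pa v v;
  f_dep : forall (v : V) (x x' : V -> R) (u u' : {ffun exo -> exoval}),
    (forall w, pa w v -> x w = x' w) ->
    (forall e, e \in uscope v -> u e = u' e) ->
    f v x u = f v x' u';
  f_rng : forall v x u, f v x u \in rng v
}.

Definition compatible (V : finType) (R : realType) (G : graph V) (M : SCM V R) : Prop :=
  (forall w v, @pa _ _ M w v -> de G w v) /\
  (forall v w, v != w ->
     [exists e, (e \in @uscope _ _ M v) && (e \in @uscope _ _ M w)] -> be G v w).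

(* A mixed policy scope: S X = Some C_X  iff  <X, C_X> \in S. *)
Definition mps (V : finType) := {ffun V -> option {set V}}.

Definition mps_graph (V : finType) (G : graph V) (S : mps V) : rel V :=
  fun w v => match S v with Some C => w \in C | None => de G w v end.

Definition is_MPS (V : finType) (G : graph V) (I : {set V}) (Y : V) (S : mps V) : Prop :=
  (forall X C, S X = Some C -> [/\ X \in I, X \notin C & Y \notin C]) /\
  acyclic (mps_graph G S).

Definition is_hard (V : finType) (S : mps V) : Prop :=
  forall X C, S X = Some C -> C = set0.

Definition is_DMP (V : finType) (R : realType) (M : SCM V R) (S : mps V)
  (pol : V -> (V -> R) -> R) : Prop :=
  forall X C, S X = Some C ->
    (forall x x', {in C, x =1 x'} -> pol X x = pol X x') /\
    (forall x, pol X x \in @rng _ _ M X).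

(* The (unique, by acyclicity) solution of the intervened system for
   exogenous value u, obtained by #|V| rounds of recursive evaluation. *)
Definition solve (V : finType) (R : realType) (M : SCM V R) (S : mps V)
  (pol : V -> (V -> R) -> R) (u : {ffun exo M -> exoval M}) : V -> R :=
  iter #|V| (fun x v => match S v with Some _ => pol v x | None => @f _ _ M v x u end)
       (fun _ => 0).

Definition mu (V : finType) (R : realType) (M : SCM V R) (S : mps V)
  (pol : V -> (V -> R) -> R) (Y : V) : R :=
  \sum_(u : {ffun exo M -> exoval M}) (\prod_e @pU _ _ M e (u e)) * @solve _ _ M S pol u Y.

Definition is_min (R : realType) (P : R -> Prop) (m : R) : Prop :=
  P m /\ forall r, P r -> m <= r.

From HB Require Import structures.
From mathcomp Require Import all_boot all_order all_algebra.
From mathcomp Require Import reals.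
From mathcomp Require Import lra zify.
Set Implicit Arguments. Unset Strict Implicit. Unset Printing Implicit Defensive.
Import Order.TTheory GRing.Theory Num.Theory.
Local Open Scope ring_scope.

(* Take a shortest directed path X = x_0 -> ... -> x_k = Y and a fair coin U.
   The model sets C := U, lets each x_i copy x_(i-1), and lets Y indicate that
   x_(k-1) differs from C (if C is a non-intervenable parent of Y) or from U
   (otherwise; then C <-> Y share U).  A hard intervention cannot see the coin,
   so the value reaching x_(k-1) is independent of it while the value it is
   compared with is the coin itself: every hard policy gives E[Y] = 1/2.  The
   mixed policy X := C, legal because the scope <X, {C}> is acyclic (which also
   keeps C off the path), feeds the coin into the path, and then Y = 0 surely. *)

Section PathPred.
Variables (T : eqType) (x0 : T) (p : seq T).

Definition path_pred (v : T) : T := nth x0 (x0 :: p) (index v p).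

Lemma path_pred_mem v : v \in p -> path_pred v \in x0 :: p.
Proof. by move=> vp; rewrite mem_nth //= ltnS ltnW // index_mem. Qed.

Lemma path_pred_edge (e : rel T) v : path e x0 p -> v \in p -> e (path_pred v) v.
Proof.
move=> /pathP-/(_ x0 (index v p)) + vp; rewrite index_mem vp nth_index //.
exact.
Qed.

Hypothesis uniq_p : uniq (x0 :: p).

Lemma path_pred_nth i : (i < size p)%N ->
  path_pred (nth x0 (x0 :: p) i.+1) = nth x0 (x0 :: p) i.
Proof.
by move=> ip; case/andP: uniq_p => _ up; rewrite /path_pred [nth _ _ i.+1]/= index_uniq.
Qed.

Lemma path_pred_neq v : v \in p -> path_pred v != v.
Proof.
move=> vp; have ip : (index v p < size p)%N by rewrite index_mem.
rewrite -[X in _ != X](nth_index x0 vp) /path_pred.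
rewrite -[nth x0 p _]/(nth x0 (x0 :: p) (index v p).+1).
by rewrite nth_uniq //= ?ltn_eqF // ltnW.
Qed.

Lemma path_pred_neq_last v : v \in p -> path_pred v != last x0 p.
Proof.
move=> vp; have ip : (index v p < size p)%N by rewrite index_mem.
rewrite -[last x0 p]/(last x0 (x0 :: p)) -nth_last /path_pred.
by rewrite nth_uniq //= 1?neq_ltn ?ip // ltnW.
Qed.

End PathPred.

Section Scopes.
Variables (V : finType) (G : graph V).

Definition mps_empty : mps V := [ffun => None].

Definition mps_single (X : V) (C : {set V}) : mps V :=
  [ffun v => if v == X then Some C else None].

Lemma mps_graph_path (S : mps V) x q :
  all (fun v => S v == None) q -> path (de G) x q -> path (mps_graph G S) x q.
Proof.
elim: q x => //= v q IH x /andP [/eqP Sv Sq] /andP [e pq].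
by rewrite /mps_graph Sv e IH.
Qed.

Lemma is_MPS_empty I Y : acyclic (de G) -> is_MPS G I Y mps_empty.
Proof.
move=> acyc; split=> [X C|x q]; first by rewrite ffunE.
by rewrite (@eq_path _ _ (de G)) => [|w v]; [exact: acyc | rewrite /mps_graph ffunE].
Qed.

Lemma is_MPS_free I Y S v : is_MPS G I Y S -> v \notin I -> S v = None.
Proof.
move=> [hS _] vI; case Sv: (S v) => [D|] //.
by case: (hS v D Sv) => vI'; rewrite vI' in vI.
Qed.

(* A directed path from X to C would close a cycle through the new edge C -> X. *)
Lemma mps_single_not_connect X C :
  acyclic (mps_graph G (mps_single X [set C])) -> ~~ connect (de G) X C.
Proof.
move=> acyc; apply/negP => /connectP [q0 pq0].
case: (shortenP pq0) => q pq /andP [Xq _] _ lastC.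
have Sq : all (fun v => mps_single X [set C] v == None) q.
  by apply/allP => v vq; rewrite ffunE; case: ifP => // /eqP vX; rewrite -vX vq in Xq.
suff /acyc/(_ (last_rcons _ _ _)) : path (mps_graph G (mps_single X [set C])) X (rcons q X).
  by case: q {pq Xq Sq lastC}.
by rewrite rcons_path mps_graph_path //= /mps_graph ffunE eqxx -lastC set11.
Qed.

End Scopes.

Section Rounds.
Variables (V : finType) (R : realType) (M : SCM V R) (S : mps V).
Variables (pol : V -> (V -> R) -> R) (u : {ffun exo M -> exoval M}).

Definition round (x : V -> R) (v : V) : R :=
  match S v with Some _ => pol v x | None => @f _ _ M v x u end.

Definition rounds (n : nat) : V -> R := iter n round (fun _ => 0).

Lemma solveE : solve S pol u = rounds #|V|.
Proof. by []. Qed.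

Lemma rounds_free n v : S v = None -> rounds n.+1 v = @f _ _ M v (rounds n) u.
Proof. by rewrite [rounds _]iterS /round => ->. Qed.

Lemma rounds_scope n v D : S v = Some D -> rounds n.+1 v = pol v (rounds n).
Proof. by rewrite [rounds _]iterS /round => ->. Qed.

Lemma rounds_rng n v : is_DMP M S pol -> rounds n.+1 v \in @rng _ _ M v.
Proof.
move=> hD; case Sv: (S v) => [D|]; last by rewrite rounds_free // f_rng.
by rewrite (rounds_scope _ Sv); case: (hD v D Sv).
Qed.

End Rounds.

Arguments rounds {V R} M S pol u n : simpl never.

Lemma sum_ffun_unit (R : nmodType) (T : finType) (F : {ffun unit -> T} -> R) :
  \sum_(u : {ffun unit -> T}) F u = \sum_(c : T) F [ffun=> c].
Proof.
rewrite (reindex (fun c : T => [ffun=> c])) //.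
exists (fun u : {ffun unit -> T} => u tt) => [c _|u _]; rewrite ?ffunE //.
by apply/ffunP => -[]; rewrite ffunE.
Qed.

Lemma bool_natr_mem01 (R : pzSemiRingType) (c : bool) : c%:R \in [:: 0; 1 : R].
Proof. by case: c; rewrite !inE eqxx ?orbT. Qed.

Lemma bool_natr_eq1 (R : nzSemiRingType) (c : bool) : ((c%:R : R) == 1)%:R = c%:R :> R.
Proof. by case: c; rewrite ?eqxx // eq_sym oner_eq0. Qed.

Lemma half_ge0 (R : numFieldType) : 0 <= (2^-1 : R).
Proof. by rewrite invr_ge0 ler0n. Qed.

Lemma half_sum1 (R : realFieldType) : \sum_(a : bool) (2^-1 : R) = 1.
Proof. rewrite big_bool /=; lra. Qed.

Section Model.
Variables (V : finType) (R : realType) (X Y C : V) (p : seq V) (b : bool).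
Hypotheses (uniq_CXp : uniq (C :: X :: p)) (Y_last : Y = last X p) (X_neq_Y : X != Y).

Let uniq_Xp : uniq (X :: p). Proof. by case/andP: uniq_CXp. Qed.

Let C_notin_Xp : C \notin X :: p. Proof. by case/andP: uniq_CXp. Qed.

Let Y_in_p : Y \in p.
Proof. by move: (mem_last X p); rewrite -Y_last inE eq_sym (negbTE X_neq_Y). Qed.

Let Y_nth : Y = nth X (X :: p) (size p).
Proof. by rewrite Y_last -[size p]/((size (X :: p)).-1) nth_last. Qed.

Let C_neq_Y : C != Y.
Proof. by apply: contraNneq C_notin_Xp => ->; rewrite inE Y_in_p orbT. Qed.

Let pred_neq_C v : v \in p -> path_pred X p v != C.
Proof. by move=> /(path_pred_mem X); apply: contraTneq => ->. Qed.

Let pred_neq_Y v : v \in p -> path_pred X p v != Y.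
Proof. by rewrite Y_last; apply: path_pred_neq_last. Qed.

(* The coin needs one round per edge to travel from C along the path, and
   C, X and the path are distinct vertices. *)
Let card_V : exists2 n, #|V| = n.+2 & (size p <= n)%N.
Proof.
have := max_card (mem (C :: X :: p)); rewrite (card_uniqP uniq_CXp) /=.
by case: #|V| => [|[|n]] // pn; exists n.
Qed.

Definition model_pa : rel V := fun w v =>
  (v \in p) && (w == path_pred X p v) || [&& b, v == Y & w == C].

Definition model_scope (v : V) : {set unit} :=
  if (v == C) || ~~ b && (v == Y) then setT else set0.

Definition model_f (v : V) (x : V -> R) (u : {ffun unit -> bool}) : R :=
  if v == Y then (x (path_pred X p Y) != (if b then x C else (u tt)%:R))%:R
  else if v == C then (u tt)%:R
  else if v \in p then (x (path_pred X p v) == 1)%:R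
  else 0.

Lemma model_pa_irr v : ~~ model_pa v v.
Proof.
apply/norP; split.
  by apply/andP => -[vp /eqP e]; move: (path_pred_neq uniq_Xp vp); rewrite -e eqxx.
by apply/and3P => -[_ /eqP -> /eqP YC]; move: C_neq_Y; rewrite YC eqxx.
Qed.

Lemma model_f_dep v (x x' : V -> R) (u u' : {ffun unit -> bool}) :
  (forall w, model_pa w v -> x w = x' w) ->
  (forall e, e \in model_scope v -> u e = u' e) ->
  model_f v x u = model_f v x' u'.
Proof.
move=> hx hu; have hu' : (v == C) || ~~ b && (v == Y) -> u tt = u' tt.
  by move=> h; apply: hu; rewrite /model_scope h inE.
have hpred : v \in p -> x (path_pred X p v) = x' (path_pred X p v).
  by move=> vp; apply: hx; rewrite /model_pa vp eqxx.
rewrite /model_f; case: (v =P Y) => [vY | _].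
  move: hx hu' hpred; rewrite vY => hx hu' ->//; case: ifP => hb.
    by rewrite (hx C) // /model_pa hb !eqxx orbT.
  by rewrite hu' // hb eqxx orbT.
case: (v =P C) => [vC | _]; first by rewrite hu' ?vC ?eqxx.
by case: ifP => // /hpred ->.
Qed.

Lemma model_f_rng v (x : V -> R) (u : {ffun unit -> bool}) : model_f v x u \in [:: 0; 1].
Proof.
by rewrite /model_f; repeat case: ifP => _; rewrite ?bool_natr_mem01 // inE eqxx.
Qed.

Definition model : SCM V R :=
  @MkSCM V R unit bool (fun _ _ => 2^-1) (fun _ _ => half_ge0 R) (fun _ => half_sum1 R)
    (fun _ => [:: 0; 1]) model_pa model_scope model_f
    model_pa_irr model_f_dep model_f_rng.

Lemma model_compatible (G : graph V) :
  path (de G) X p -> (b -> de G C Y) -> (~~ b -> be G C Y) -> symmetric (be G) ->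
  compatible G model.
Proof.
move=> pth hb hnb bsym; split=> [w v | v w vw /existsP [e /andP []]] /=.
  case/orP => [/andP [vp /eqP ->] | /and3P [/hb CY /eqP -> /eqP ->] //].
  exact: path_pred_edge.
rewrite /model_scope; case: ifP => hv; case: ifP => hw; rewrite ?in_set0 // => _ _.
case/orP: hv => [/eqP vC | /andP [nb /eqP vY]];
  case/orP: hw => [/eqP wC | /andP [nb' /eqP wY]].
- by rewrite vC wC eqxx in vw.
- by rewrite vC wY hnb.
- by rewrite vY wC bsym hnb.
- by rewrite vY wY eqxx in vw.
Qed.

Lemma mu_model_coin S pol v : mu model S pol v =
  2^-1 * (solve (M := model) S pol [ffun=> true] v +
          solve (M := model) S pol [ffun=> false] v).
Proof.
rewrite /mu /= prodr_const card_unit expr1 -mulr_sumr.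
by rewrite (sum_ffun_unit (fun u => solve (M := model) S pol u v)) big_bool.
Qed.

Section ModelRounds.
Variables (S : mps V) (pol : V -> (V -> R) -> R).
Implicit Type u : {ffun unit -> bool}.

Lemma rounds_C u n : S C = None -> rounds model S pol u n.+1 C = (u tt)%:R.
Proof. by move=> SC; rewrite rounds_free //= /model_f (negbTE C_neq_Y) eqxx. Qed.

Lemma rounds_Y u n : S Y = None -> (b -> S C = None) ->
  rounds model S pol u n.+2 Y =
  (rounds model S pol u n.+1 (path_pred X p Y) != (u tt)%:R)%:R.
Proof.
move=> SY SC; rewrite rounds_free //= /model_f eqxx.
by case: ifP => // /SC /rounds_C ->.
Qed.

Lemma rounds_path u n v : S v = None -> v \in p -> v != Y ->
  rounds model S pol u n.+1 v = (rounds model S pol u n (path_pred X p v) == 1)%:R.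
Proof.
move=> Sv vp vY; rewrite rounds_free //= /model_f (negbTE vY) vp ifF //.
by apply: contraNF C_notin_Xp => /eqP <-; rewrite inE vp orbT.
Qed.

Lemma mu_model_ge0 : is_DMP model S pol -> 0 <= mu model S pol Y.
Proof.
move=> hD; have [n EV _] := card_V.
have ge0 u : 0 <= solve (M := model) S pol u Y.
  rewrite solveE EV; move: (rounds_rng (M := model) u n.+1 Y hD).
  by rewrite !inE => /orP [] /eqP ->.
by rewrite mu_model_coin mulr_ge0 ?addr_ge0 ?half_ge0.
Qed.

Hypotheses (S_hard : is_hard S) (pol_DMP : is_DMP model S pol).

Lemma rounds_hard_coin_indep n u u' v : v != C -> v != Y ->
  rounds model S pol u n v = rounds model S pol u' n v.
Proof.
elim: n v => [//|n IH] v vC vY; case Sv: (S v) => [D|].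
  rewrite !(rounds_scope _ _ _ Sv); case: (pol_DMP Sv) => + _; apply=> w.
  by rewrite (S_hard Sv) in_set0.
case: (boolP (v \in p)) => vp; first by rewrite !rounds_path // IH ?pred_neq_C ?pred_neq_Y.
by rewrite !rounds_free //= /model_f (negbTE vY) (negbTE vC) (negbTE vp).
Qed.

Lemma mu_model_hard : S Y = None -> (b -> S C = None) -> mu model S pol Y = 2^-1.
Proof.
move=> SY SC; have [n EV _] := card_V.
rewrite mu_model_coin !solveE EV !rounds_Y //.
rewrite (rounds_hard_coin_indep _ [ffun=> true] [ffun=> false]) ?pred_neq_C ?pred_neq_Y //.
move: (rounds_rng (M := model) [ffun=> false] n (path_pred X p Y) pol_DMP); rewrite !ffunE.
rewrite !inE => /orP [] /eqP ->.
  by rewrite eqxx (eq_sym 0) oner_eq0 /= addr0 mulr1.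
by rewrite eqxx oner_eq0 /= add0r mulr1.
Qed.

End ModelRounds.

Definition copy_C : V -> (V -> R) -> R := fun _ x => (x C == 1)%:R.

Let S1 := mps_single X [set C].

Let S1_C : S1 C = None.
Proof. by rewrite ffunE ifN //; apply: contraNneq C_notin_Xp => ->; rewrite mem_head. Qed.

Let S1_Y : S1 Y = None.
Proof. by rewrite ffunE eq_sym (negbTE X_neq_Y). Qed.

Lemma copy_C_DMP : is_DMP model S1 copy_C.
Proof.
move=> v D; rewrite ffunE; case: ifP => // _ [<-].
by split=> [x x' /(_ C (set11 C)) eqC | x]; rewrite /copy_C ?eqC ?bool_natr_mem01.
Qed.

Lemma rounds_copy (u : {ffun unit -> bool}) j n : (j < size p)%N -> (j <= n)%N ->
  rounds model S1 copy_C u n.+2 (nth X (X :: p) j) = (u tt)%:R.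
Proof.
elim: j n => [|j IH] n jp jn.
  have S1_X : S1 X = Some [set C] by rewrite ffunE eqxx.
  by rewrite (rounds_scope _ _ _ S1_X) /copy_C rounds_C // bool_natr_eq1.
case: n jn => // n jn; have jp' := ltnW jp; have Xnp : X \notin p by case/andP: uniq_Xp.
have vp : nth X (X :: p) j.+1 \in p by rewrite /= mem_nth.
have S1v : S1 (nth X (X :: p) j.+1) = None.
  by rewrite ffunE ifN //; apply: contraNneq Xnp => <-.
have vY : nth X (X :: p) j.+1 != Y by rewrite Y_nth nth_uniq //=; lia.
by rewrite rounds_path // path_pred_nth // IH // bool_natr_eq1.
Qed.

Lemma mu_model_copy : mu model S1 copy_C Y = 0.
Proof.
have [[|n] EV pn] := card_V; first by move: Y_in_p pn; case: (p).
have p_gt0 : (0 < size p)%N by move: Y_in_p; case: (p).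
have predY : path_pred X p Y = nth X (X :: p) (size p).-1.
  by rewrite Y_nth -{1}(prednK p_gt0) path_pred_nth // ltn_predL.
have pn' : ((size p).-1 <= n)%N by rewrite -ltnS prednK.
have pl : ((size p).-1 < size p)%N by rewrite ltn_predL.
by rewrite mu_model_coin !solveE EV !rounds_Y // predY !rounds_copy // !eqxx addr0 mulr0.
Qed.

End Model.

Theorem proposition1 (V : finType) (R : realType) (G : graph V) (Y : V) (I : {set V}) :
  causal_graph G -> Y \notin I ->
  (exists (C X : V),
     ((de G C Y && (C \notin I)) || be G C Y) /\
     X \in I /\ connect (de G) X Y /\
     is_MPS G I Y [ffun v => if v == X then Some [set C] else None]) ->
  exists M : SCM V R, compatible G M /\
    exists m_hard m_all : R,
      is_min (fun r => exists (S : mps V) pol,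
                [/\ is_MPS G I Y S, is_hard S, is_DMP M S pol & r = mu M S pol Y]) m_hard /\
      is_min (fun r => exists (S : mps V) pol,
                [/\ is_MPS G I Y S, is_DMP M S pol & r = mu M S pol Y]) m_all /\
      m_all < m_hard.
Proof.
move=> [acyc bsym _] YnI [C [X [hC [XI [/connectP [p0 pth0 Y_last0] hS1]]]]].
have XneY : X != Y by apply: contraNneq YnI => <-.
case: (shortenP pth0) Y_last0 => p pth uXp _ Y_last.
have uCXp : uniq (C :: X :: p).
  rewrite cons_uniq uXp andbT; apply: contra (mps_single_not_connect hS1.2).
  by move/(path_connect pth).
set b := de G C Y && (C \notin I).
have SC S : is_MPS G I Y S -> b -> S C = None.
  by move=> hS /andP [_]; apply: is_MPS_free hS.
exists (model R b uCXp Y_last XneY); split.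
  apply: model_compatible => //; first by case/andP.
  by move=> nb; move: hC; rewrite -/b (negbTE nb).
exists 2^-1, 0; split; [split | split; [split |]].
- have hard0 : is_hard (mps_empty V) by move=> ? ?; rewrite ffunE.
  have DMP0 : is_DMP (model R b uCXp Y_last XneY) (mps_empty V) (fun _ _ => 0).
    by move=> ? ?; rewrite ffunE.
  exists (mps_empty V), (fun _ _ => 0).
  by split; [exact: is_MPS_empty | | | rewrite mu_model_hard // ?ffunE].
- move=> r [S [pol [hS hard hD ->]]].
  by rewrite mu_model_hard ?(is_MPS_free hS YnI) //; exact: SC hS.
- exists (mps_single X [set C]), (copy_C C).
  by split=> //; [exact: copy_C_DMP | rewrite mu_model_copy].
- by move=> r [S [pol [_ hD ->]]]; exact: mu_model_ge0.
- by rewrite invr_gt0 ltr0n.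
Qed.
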